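(* Let $\varepsilon>0$, grant (NormEq) with constant $C'$ and (Hi) with parameters $r$ and $\alpha$, and assume that the oracle is the Bayes rule, i.e. $f^*(x)=\mathrm{sign}(2\eta(x)-1)$ for all $x\in\mathcal X$. Then every $f\in F$ with $\|f-f^*\|_{L_2}\le r$ satisfies $\|f-f^*\|_{L_2}^2\le\frac2\alpha P\mathcal L_f$.
   Context: Setting: $F$ is a convex class of measurable functions $\mathcal X\to\mathbb R$, $\mathcal Y=\{-1,1\}$, $(X,Y)\sim P$, $X\sim\mu$, $\|g\|_{L_p}=(\mathbb E|g(X)|^p)^{1/p}$, $\eta(x)=\mathbb P(Y=1\mid X=x)$. The hinge loss is $\ell_f(x,y)=\max(1-yf(x),0)$. $f^*$ is the minimizer of $f\mapsto P\ell_f$ over $F$, $\mathcal L_f=\ell_f-\ell_{f^*}$, $P\mathcal L_f=\mathbb E\mathcal L_f(X,Y)$. (NormEq): there is $C'>0$ such that $\|f-f^*\|_{L_{2+\varepsilon}}\le C'\|f-f^*\|_{L_2}$ for all $f\in F$. (Hi): there exist $\alpha>0$ and $0<r\le(\sqrt2C')^{-(2+\varepsilon)/\varepsilon}$ such that for all $x\in\mathcal X$, $\min(\eta(x),1-\eta(x),|1-2\eta(x)|)\ge\alpha$. *)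

From HB Require Import structures.
From mathcomp Require Import all_boot all_order all_algebra.
From mathcomp Require Import all_classical all_reals all_analysis.
Set Implicit Arguments. Unset Strict Implicit. Unset Printing Implicit Defensive.
Import Order.TTheory GRing.Theory Num.Theory.
Local Open Scope classical_set_scope.
Local Open Scope ring_scope.

(* Labels Y in {-1,1} are encoded by bool: true <-> 1, false <-> -1. *)
Definition lab {R : realType} (b : bool) : R := if b then 1 else -1.

Section defs.
Context {d} {T : measurableType d} {R : realType}.

Definition hinge (f : T -> R) (z : T * bool) : R :=
  Num.max (1 - lab z.2 * f z.1) 0.

Definition risk (P : probability (T * bool)%type R) (f : T -> R) : \bar R :=
  (\int[P]_z (hinge f z)%:E)%E.

Definition excess_risk (P : probability (T * bool)%type R) (f fstar : T -> R) : \bar R :=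
  (risk P f - risk P fstar)%E.

Definition Lpnorm (P : probability (T * bool)%type R) (p : R) (g : T -> R) : \bar R :=
  Lnorm P p%:E (fun z => (g z.1)%:E).

(* eta is a version of x |-> P(Y = 1 | X = x) *)
Definition is_cond_prob (P : probability (T * bool)%type R) (eta : T -> R) : Prop :=
  measurable_fun setT eta /\
  forall A : set T, measurable A ->
    P (A `*` [set true]) = (\int[P]_(z in A `*` setT) (eta z.1)%:E)%E.

Definition convex_class (F : set (T -> R)) : Prop :=
  forall f g, F f -> F g -> forall t : R, 0 <= t <= 1 ->
    F (fun x => t * f x + (1 - t) * g x).

Definition measurable_class (F : set (T -> R)) : Prop :=
  forall f, F f -> measurable_fun setT f.

Definition risk_minimizer (P : probability (T * bool)%type R) (F : set (T -> R))
    (fstar : T -> R) : Prop :=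
  F fstar /\ forall f, F f -> (risk P fstar <= risk P f)%E.

Definition NormEq (P : probability (T * bool)%type R) (F : set (T -> R))
    (fstar : T -> R) (eps C' : R) : Prop :=
  0 < C' /\ forall f, F f ->
    (Lpnorm P (2 + eps) (fun x => (f x - fstar x)%R)
       <= C'%:E * Lpnorm P 2 (fun x => (f x - fstar x)%R))%E.

Definition Hi (eta : T -> R) (eps C' r alpha : R) : Prop :=
  0 < alpha /\ 0 < r /\ r <= (Num.sqrt 2 * C') `^ (- ((2 + eps) / eps)) /\
  forall x, alpha <= Num.min (eta x) (Num.min (1 - eta x) `|1 - 2 * eta x|).

End defs.

(* Given X = x, the hinge risk of a prediction u is
   eta (1 - u)_+ + (1 - eta) (1 + u)_+, a piecewise linear function of u
   minimised at the Bayes value sign (2 eta - 1), with slopes at least alpha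
   in absolute value on both sides; integrating over X, the excess risk of f
   dominates alpha ||f - f*||_{L1}.  On the other hand, with b = ||f - f*||_{L2},
   the pointwise bound t^2 <= t + t^(2+eps) and (NormEq) give
   b^2 <= ||f - f*||_{L1} + (C' b)^(2+eps), and b <= r makes the last term at
   most b^2 / 2. *)

From HB Require Import structures.
From mathcomp Require Import all_boot all_order all_algebra.
From mathcomp Require Import all_classical all_reals all_analysis.
From mathcomp Require Import measurable_realfun lra.
Import Order.TTheory GRing.Theory Num.Theory.
Import HBNNSimple.
Local Open Scope classical_set_scope.
Local Open Scope ring_scope.

Definition cond_hinge_risk {R : realDomainType} (e u : R) : R :=
  e * Num.max (1 - u) 0 + (1 - e) * Num.max (1 + u) 0.

Lemma cond_hinge_risk_sg_margin (R : realFieldType) (a e u : R) :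
  a <= e -> a <= 1 - e -> a <= `|1 - 2 * e| ->
  cond_hinge_risk e (Num.sg (2 * e - 1)) + a * `|u - Num.sg (2 * e - 1)|
  <= cond_hinge_risk e u.
Proof.
rewrite /cond_hinge_risk => ae ae' ae''.
have [lt1|gt1|eq1] := ltrgtP (2 * e - 1) 0.
- rewrite ltr0_sg // (@max_l _ _ (1 - -1)) ?(@max_r _ _ (1 + -1)); try lra.
  rewrite gtr0_norm in ae''; last lra.
  have [u1|u1] := lerP u (-1).
    rewrite (@max_l _ _ (1 - u)) ?(@max_r _ _ (1 + u)) ?ler0_norm; try lra; nra.
  have [u2|u2] := lerP u 1.
    rewrite (@max_l _ _ (1 - u)) ?(@max_l _ _ (1 + u)) ?ger0_norm; try lra; nra.
  rewrite (@max_r _ _ (1 - u)) ?(@max_l _ _ (1 + u)) ?ger0_norm; try lra; nra.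
- rewrite gtr0_sg // (@max_r _ _ (1 - 1)) ?(@max_l _ _ (1 + 1)); try lra.
  rewrite ltr0_norm in ae''; last lra.
  have [u1|u1] := lerP u (-1).
    rewrite (@max_l _ _ (1 - u)) ?(@max_r _ _ (1 + u)) ?ler0_norm; try lra; nra.
  have [u2|u2] := lerP u 1.
    rewrite (@max_l _ _ (1 - u)) ?(@max_l _ _ (1 + u)) ?ler0_norm; try lra; nra.
  rewrite (@max_r _ _ (1 - u)) ?(@max_l _ _ (1 + u)) ?ger0_norm; try lra; nra.
- have e_half : 1 - 2 * e = 0 by lra.
  have a0 : a <= 0 by move: ae''; rewrite e_half normr0.
  have h1 : 1 - u <= Num.max (1 - u) 0 by rewrite le_max lexx.
  have h2 : 1 + u <= Num.max (1 + u) 0 by rewrite le_max lexx.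
  rewrite eq1 sgr0 !subr0 addr0 (@max_l _ _ 1) //.
  have : a * `|u| <= 0 by rewrite mulr_le0_ge0.
  have -> : e = 2^-1 by lra.
  lra.
Qed.

Lemma powR2_le_add_powR (R : realType) (eps x : R) : 0 < eps -> 0 <= x ->
  x `^ 2 <= x + x `^ (2 + eps).
Proof.
move=> eps0 x0; have [x1|x1] := lerP x 1.
  rewrite powR_mulrn // expr2; have := powR_ge0 x (2 + eps).
  have : x * x <= x by rewrite ler_piMl.
  lra.
have : x `^ 2 <= x `^ (2 + eps) by apply: ler_powR; lra.
lra.
Qed.

Lemma scaled_powR_le_half_sqr (R : realType) (eps C b : R) :
  0 < eps -> 0 < C -> 0 <= b -> b <= (Num.sqrt 2 * C) `^ (- ((2 + eps) / eps)) ->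
  (C * b) `^ (2 + eps) <= b ^+ 2 / 2.
Proof.
move=> eps0 C0 b0 b_small.
have [->|bpos] := eqVneq b 0.
  by rewrite mulr0 powR0 ?expr0n ?mul0r //; lra.
have bp : 0 < b by rewrite lt_def bpos b0.
have sqrt2_ge1 : 1 <= Num.sqrt 2 :> R.
  by rewrite -[X in X <= _]sqrtr1 ler_sqrt // ler1n.
set K := C `^ (2 + eps); set S := Num.sqrt 2 `^ (2 + eps).
have K0 : 0 < K by apply: powR_gt0.
have S2 : 2 <= S.
  have : Num.sqrt 2 `^ 2 <= S by apply: ler_powR => //; lra.
  by rewrite powR_mulrn // sqr_sqrtr //; lra.
have b_eps : b `^ eps <= (S * K)^-1.
  apply: (le_trans (ge0_ler_powR (ltW eps0) _ _ b_small)); rewrite ?nnegrE ?powR_ge0 //.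
  by rewrite -powRrM mulNr divfK ?gt_eqF // powRN powRM // ltW.
have KX : K * b `^ eps <= 2^-1.
  apply: (le_trans (ler_wpM2l (ltW K0) b_eps)).
  rewrite invfM mulrCA mulfV ?gt_eqF // mulr1.
  by rewrite lef_pV2 ?posrE //; lra.
rewrite powRM ?(ltW C0) // -/K addrC powRD ?bpos ?implybT // -powR_mulrn ?(ltW bp) //.
have := powR_ge0 b 2; nra.
Qed.

Lemma indic_setX (T U : Type) (R : numDomainType) (A : set T) (B : set U)
  (z : T * U) : \1_(A `*` B) z = \1_A z.1 * \1_B z.2 :> R.
Proof.
by rewrite !indicE in_setX; case: (_ \in A); case: (_ \in B); rewrite ?mulr1 ?mulr0.
Qed.

Section integral_fst.
Context {d d' : measure_display} {T : measurableType d} {U : measurableType d'}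
  {R : realType}.
Variable mu : {measure set (T * U)%type -> \bar R}.
Local Open Scope ereal_scope.

Lemma integral_nnsfun_fst_mulr (s : {nnsfun T >-> R}) (c : T * U -> R) :
  measurable_fun setT c -> (forall z, (0 <= c z)%R) ->
  \int[mu]_z (s z.1 * c z)%:E =
  \sum_(y \in range s) y%:E * \int[mu]_z (\1_(s @^-1` [set y]) z.1 * c z)%:E.
Proof.
move=> mc c0.
have mindic y : measurable_fun setT (fun z : T * U => \1_(s @^-1` [set y]) z.1 : R).
  by apply: measurableT_comp => //; exact: measurable_indic.
have sE z : (s z.1 * c z)%:E =
    \sum_(y \in range s) (y * (\1_(s @^-1` [set y]) z.1 * c z))%:E.
  by rewrite fsumEFin // [in LHS]fimfunE mulr_fsuml; congr EFin;
    apply: eq_fsbigr => y _; rewrite mulrA.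
under eq_integral do rewrite sE.
rewrite ge0_integral_fsum //; last 2 first.
- by move=> y; apply/measurable_EFinP; apply: measurable_funM => //;
    apply: measurable_funM.
- move=> y z _; rewrite lee_fin mulrA mulr_ge0 //.
  by have := nnfun_muleindic_ge0 s y z.1; rewrite -EFinM lee_fin.
apply: eq_fsbigr => y; rewrite inE => -[x _ <-].
under eq_integral do rewrite EFinM.
rewrite ge0_integralZl_EFin //.
- by move=> z _; rewrite lee_fin mulr_ge0.
- by apply/measurable_EFinP; apply: measurable_funM.
Qed.

Lemma integral_fst_mulr_approx (phi : T -> R)
    (mphi : measurable_fun setT (EFin \o phi)) (c : T * U -> R) :
  (forall x, (0 <= phi x)%R) -> measurable_fun setT c -> (forall z, (0 <= c z)%R) ->
  \int[mu]_z (phi z.1 * c z)%:E =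
  limn (fun n => \int[mu]_z (nnsfun_approx measurableT mphi n z.1 * c z)%:E).
Proof.
move=> phi0 mc c0; set h := nnsfun_approx measurableT mphi.
rewrite -monotone_convergence //; last 3 first.
- by move=> n; apply/measurable_EFinP; apply: measurable_funM => //;
    apply: measurableT_comp.
- by move=> n z _; rewrite lee_fin mulr_ge0.
- move=> z _ m n mn; rewrite lee_fin ler_wpM2r //.
  by have /lefP := nd_nnsfun_approx measurableT mphi mn; apply.
apply: eq_integral => z _; apply/esym/cvg_lim => //; apply: cvg_EFin.
  exact: nearW.
apply: cvgMr_tmp.
have /fine_cvgP[_] := cvg_nnsfun_approx measurableT mphi
  (fun x _ => (phi0 x : 0 <= (phi x)%:E)) (I : setT z.1).
by apply: cvg_trans; apply: near_eq_cvg; apply: nearW.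
Qed.

Section density.
Context {B : set U} {psi : T -> R}.
Hypotheses (mB : measurable B) (mpsi : measurable_fun setT psi)
  (psi_ge0 : forall x, (0 <= psi x)%R)
  (mu_setX : forall A, measurable A ->
    mu (A `*` B) = \int[mu]_(z in A `*` setT) (psi z.1)%:E).

Lemma integral_indic_setX (A : set T) : measurable A ->
  \int[mu]_z (\1_A z.1 * \1_B z.2)%:E = \int[mu]_z (\1_A z.1 * psi z.1)%:E.
Proof.
move=> mA; under eq_integral do rewrite -indic_setX.
rewrite integral_indic ?setIT //; last exact: measurableX.
rewrite mu_setX // integral_mkcond epatch_indic; apply: eq_integral => z _ /=.
by rewrite mulrC EFinM indic_setX indicT mulr1.
Qed.

Lemma integral_nnsfun_setX (s : {nnsfun T >-> R}) :
  \int[mu]_z (s z.1 * \1_B z.2)%:E = \int[mu]_z (s z.1 * psi z.1)%:E.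
Proof.
rewrite !integral_nnsfun_fst_mulr //; last 2 first.
- by apply: measurableT_comp => //; exact: measurable_indic.
- by apply: measurableT_comp.
by apply: eq_fsbigr => y _; rewrite integral_indic_setX.
Qed.

Lemma integral_fst_mulr_indic_snd (phi : T -> R) :
  measurable_fun setT phi -> (forall x, (0 <= phi x)%R) ->
  \int[mu]_z (phi z.1 * \1_B z.2)%:E = \int[mu]_z (phi z.1 * psi z.1)%:E.
Proof.
move=> mphi phi0.
have mphiE : measurable_fun setT (EFin \o phi) by apply/measurable_EFinP.
rewrite !(integral_fst_mulr_approx _ mphiE) //; last 2 first.
- by apply: measurableT_comp.
- by apply: measurableT_comp => //; exact: measurable_indic.
by under eq_fun do rewrite integral_nnsfun_setX.
Qed.

End density.
End integral_fst.

Lemma setX_setC_density d d' (T : measurableType d) (U : measurableType d')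
    (R : realType) (mu : {finite_measure set (T * U)%type -> \bar R})
    (B : set U) (psi : T -> R) :
  measurable B -> measurable_fun setT psi -> (forall x, 0 <= psi x <= 1) ->
  (forall A, measurable A ->
    mu (A `*` B) = (\int[mu]_(z in A `*` setT) (psi z.1)%:E)%E) ->
  forall A, measurable A ->
    mu (A `*` ~` B) = (\int[mu]_(z in A `*` setT) (1 - psi z.1)%:E)%E.
Proof.
move=> mB mpsi psi01 mu_setX A mA.
have mAT : measurable (A `*` [set: U]) by exact: measurableX.
have mpsi1 : measurable_fun (A `*` setT) (fun z : T * U => (psi z.1)%:E).
  by apply: measurable_funTS; apply/measurable_EFinP; exact: measurableT_comp.
have split_mu : mu (A `*` setT) = (mu (A `*` B) + mu (A `*` ~` B))%E.
  have -> : A `*` setT = A `*` B `|` A `*` ~` B.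
    apply/seteqP; split => [[x y] [Ax _]|[x y] [] []] //=.
    by have [By|nBy] := pselect (B y); [left|right].
  rewrite measureU //; [exact: measurableX|apply: measurableX => //; exact: measurableC|].
  by apply/seteqP; split => // -[x y] [[_ By] [_ nBy]].
have split_int : mu (A `*` setT) = (\int[mu]_(z in A `*` setT) (psi z.1)%:E +
    \int[mu]_(z in A `*` setT) (1 - psi z.1)%:E)%E.
  rewrite -ge0_integralD //.
  - by under eq_integral do rewrite -EFinD subrKC; rewrite integral_cst // mul1e.
  - by move=> z _; rewrite lee_fin; case/andP: (psi01 z.1).
  - by move=> z _; rewrite lee_fin subr_ge0; case/andP: (psi01 z.1).
  - apply: measurable_funTS; apply/measurable_EFinP.
    by apply: measurable_funB => //; exact: measurableT_comp.
have fin : (\int[mu]_(z in A `*` setT) (psi z.1)%:E)%E \is a fin_num.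
  by rewrite -mu_setX // fin_num_measure //; exact: measurableX.
move: split_int; rewrite split_mu mu_setX // => /eqP.
by rewrite eq_le !leeD2lE // -eq_le => /eqP.
Qed.

Section hinge_risk.
Context {d : measure_display} {T : measurableType d} {R : realType}.
Context {P : probability (T * bool)%type R}.
Local Open Scope ereal_scope.

Lemma hinge_indicE (u : T -> R) (z : T * bool) : hinge u z =
  (Num.max (1 - u z.1) 0 * \1_[set true] z.2 +
   Num.max (1 + u z.1) 0 * \1_[set false] z.2)%R.
Proof.
case: z => x []; rewrite /hinge /lab /= !indicE.
- by rewrite mem_set // memNset //= mulr1 mulr0 addr0 mul1r.
- by rewrite memNset // mem_set //= mulr0 mulr1 add0r mulN1r opprK.
Qed.

Lemma risk_fin_num (u : T -> R) : measurable_fun setT u ->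
  (forall x, (`|u x| <= 1)%R) -> risk P u \is a fin_num.
Proof.
move=> mu_ u1; have mh : measurable_fun setT (hinge u).
  apply: measurable_maxr => //; apply: measurable_funB => //.
  apply: measurable_funM; last exact: measurableT_comp.
  by apply: measurableT_comp => //; exact: measurable_snd.
rewrite ge0_fin_numE; last by apply: integral_ge0 => z _; rewrite lee_fin le_max lexx orbT.
apply: (@le_lt_trans _ _ (\int[P]_z (cst 2%:E) z)).
  apply: ge0_le_integral => //.
  - by move=> z _; rewrite lee_fin le_max lexx orbT.
  - exact/measurable_EFinP.
  move=> [x b] _; rewrite lee_fin /hinge ge_max ler0n andbT /=.
  have := u1 x; rewrite ler_norml => /andP[? ?].
  by case: b; rewrite /lab ?mul1r ?mulN1r; lra.
by rewrite integral_cst // -ge0_fin_numE ?mule_ge0 // fin_numM // fin_num_measure.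
Qed.

Section cond_prob.
Context {eta : T -> R}.
Hypotheses (eta_cond : is_cond_prob P eta) (eta01 : forall x, (0 <= eta x <= 1)%R).

Lemma cond_prob_false (A : set T) : measurable A ->
  P (A `*` [set false]) = \int[P]_(z in A `*` setT) (1 - eta z.1)%:E.
Proof.
have -> : [set false] = ~` [set true].
  by apply/seteqP; split => -[] //=.
by case: eta_cond => meta eta_true; apply: setX_setC_density.
Qed.

Lemma risk_cond_hinge (u : T -> R) : measurable_fun setT u ->
  risk P u = \int[P]_z (cond_hinge_risk (eta z.1) (u z.1))%:E.
Proof.
case: eta_cond => meta eta_true mu_.
have eta0 x : (0 <= eta x)%R by case/andP: (eta01 x).
have eta1 x : (0 <= 1 - eta x)%R by rewrite subr_ge0; case/andP: (eta01 x).
have meta1 : measurable_fun setT (fun x => 1 - eta x)%R by exact: measurable_funB.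
have ma : measurable_fun setT (fun x => Num.max (1 - u x) 0)%R.
  by apply: measurable_maxr => //; apply: measurable_funB.
have mc : measurable_fun setT (fun x => Num.max (1 + u x) 0)%R.
  by apply: measurable_maxr => //; apply: measurable_funD.
have max_ge0 (v : R) : (0 <= Num.max v 0)%R by rewrite le_max lexx orbT.
rewrite /risk; under eq_integral do rewrite hinge_indicE EFinD.
rewrite ge0_integralD //; last 4 first.
- by move=> z _; rewrite lee_fin mulr_ge0.
- apply/measurable_EFinP; apply: measurable_funM; first exact: measurableT_comp ma _.
  by apply: measurableT_comp => //; exact: measurable_indic.
- by move=> z _; rewrite lee_fin mulr_ge0.
- apply/measurable_EFinP; apply: measurable_funM; first exact: measurableT_comp mc _.
  by apply: measurableT_comp => //; exact: measurable_indic.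
rewrite (integral_fst_mulr_indic_snd P _ meta _ eta_true _ ma) //.
rewrite (integral_fst_mulr_indic_snd P (psi := fun x => 1 - eta x)%R _ _ _
  cond_prob_false _ mc) //.
rewrite -ge0_integralD //; last 4 first.
- by move=> z _; rewrite lee_fin mulr_ge0.
- apply/measurable_EFinP.
  by apply: measurable_funM; [exact: measurableT_comp ma _|exact: measurableT_comp meta _].
- by move=> z _; rewrite lee_fin mulr_ge0.
- apply/measurable_EFinP.
  by apply: measurable_funM; [exact: measurableT_comp mc _|exact: measurableT_comp meta1 _].
by apply: eq_integral => z _; rewrite -EFinD /cond_hinge_risk mulrC [X in (_ + X)%R]mulrC.
Qed.

Lemma excess_risk_ge_L1 {a : R} {u fs : T -> R} : (0 <= a)%R ->
  (forall x, a <= Num.min (eta x) (Num.min (1 - eta x) `|1 - 2 * eta x|))%R ->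
  (forall x, fs x = Num.sg (2 * eta x - 1)) ->
  measurable_fun setT u -> measurable_fun setT fs ->
  a%:E * \int[P]_z `|u z.1 - fs z.1|%:E <= excess_risk P u fs.
Proof.
move=> a0 a_le fsE mu_ mfs.
have meta : measurable_fun setT eta by case: eta_cond.
have mdiff : measurable_fun setT (fun x => `|u x - fs x|%R).
  by apply: measurableT_comp => //; exact: measurable_funB.
have mrisk (v : T -> R) : measurable_fun setT v ->
    measurable_fun setT (fun z : T * bool => cond_hinge_risk (eta z.1) (v z.1)).
  move=> mv; apply: (measurableT_comp (f := fun x => cond_hinge_risk (eta x) (v x))) => //.
  apply: measurable_funD; apply: measurable_funM => //.
  - by apply: measurable_maxr => //; exact: measurable_funB.
  - exact: measurable_funB.
  - by apply: measurable_maxr => //; exact: measurable_funD.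
have risk_ge0 (v : T -> R) z : (0 <= cond_hinge_risk (eta z) (v z))%R.
  by case/andP: (eta01 z) => ? ?; rewrite addr_ge0 // mulr_ge0 ?subr_ge0 // le_max lexx orbT.
have fs_fin : risk P fs \is a fin_num.
  by apply: risk_fin_num => // x; rewrite fsE normr_sg; case: (_ != _).
have mdiffE : measurable_fun setT (fun z : T * bool => `|u z.1 - fs z.1|%:E).
  exact/measurable_EFinP/(measurableT_comp mdiff).
rewrite /excess_risk leeBrDl // !risk_cond_hinge // -ge0_integralZl_EFin //.
rewrite -ge0_integralD //; last 4 first.
- by move=> z _; rewrite lee_fin.
- by apply/measurable_EFinP; exact: mrisk.
- by move=> z _; rewrite mule_ge0.
- exact: emeasurable_funM.
apply: ge0_le_integral => //.
- by move=> z _; rewrite adde_ge0 ?mule_ge0 ?lee_fin.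
- apply: emeasurable_funD; last exact: emeasurable_funM.
  by apply/measurable_EFinP; exact: mrisk.
- by apply/measurable_EFinP; exact: mrisk.
move=> z _; rewrite -EFinM -EFinD lee_fin fsE.
have := a_le z.1; rewrite !le_min => /and3P[ae ae' ae''].
exact: cond_hinge_risk_sg_margin.
Qed.

End cond_prob.
End hinge_risk.

Section moments.
Context {d : measure_display} {T : measurableType d} {R : realType}.
Context {P : probability (T * bool)%type R}.
Local Open Scope ereal_scope.

Lemma Lpnorm_powR (p : R) (g : T -> R) : p != 0%R ->
  Lpnorm P p g `^ p = \int[P]_z (`|g z.1| `^ p)%:E.
Proof.
by move=> p0; rewrite /Lpnorm powR_Lnorm //; apply: eq_integral => z _;
  rewrite abse_EFin poweR_EFin.
Qed.

Lemma integral_powR_le {p c : R} {g : T -> R} : Lpnorm P p g <= c%:E ->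
  (0 < p)%R -> (0 <= c)%R -> \int[P]_z (`|g z.1| `^ p)%:E <= (c `^ p)%:E.
Proof.
move=> le_c p0 c0; rewrite -Lpnorm_powR ?gt_eqF // -poweR_EFin.
apply: gt0_ler_poweR => //; first exact: ltW.
- by rewrite in_itv /= Lnorm_ge0 leey.
- by rewrite in_itv /= lee_fin c0 leey.
Qed.

Lemma Lpnorm2_sqr_le_L1 {eps b : R} {g : T -> R} : (0 < eps)%R ->
  measurable_fun setT g -> Lpnorm P 2 g = b%:E ->
  \int[P]_z (`|g z.1| `^ (2 + eps))%:E <= (b ^+ 2 / 2)%:E ->
  (b ^+ 2)%:E <= 2%:E * \int[P]_z `|g z.1|%:E.
Proof.
move=> eps0 mg Nb moment.
have b0 : (0 <= b)%R by rewrite -lee_fin -Nb Lnorm_ge0.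
have mabs : measurable_fun setT (fun z : T * bool => `|g z.1|%R).
  by apply: measurableT_comp => //; exact: measurableT_comp mg _.
have mabsE : measurable_fun setT (fun z : T * bool => `|g z.1|%:E).
  exact/measurable_EFinP.
have mpow q : measurable_fun setT (fun z : T * bool => (`|g z.1| `^ q)%:E).
  by apply/measurable_EFinP; exact: measurableT_comp (measurable_powR q) mabs.
have L2_split : (b ^+ 2)%:E <= \int[P]_z `|g z.1|%:E +
    \int[P]_z (`|g z.1| `^ (2 + eps))%:E.
  rewrite -powR_mulrn // -poweR_EFin -Nb Lpnorm_powR ?pnatr_eq0 //.
  rewrite -ge0_integralD //.
  apply: ge0_le_integral => //.
  - exact: emeasurable_funD.
- by move=> z _; rewrite -EFinD lee_fin powR2_le_add_powR.
have A0 : 0 <= \int[P]_z `|g z.1|%:E by apply: integral_ge0 => z _; rewrite lee_fin.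
move: (le_trans L2_split (leeD2l _ moment)) A0.
case: (\int[P]_z _) => [A||] //=; last by rewrite mulry gtr0_sg // mul1e leey.
by rewrite -EFinD -EFinM !lee_fin => ? _; lra.
Qed.

End moments.

Theorem theorem9 (d : measure_display) (T : measurableType d) (R : realType)
  (P : probability (T * bool)%type R) (eta : T -> R) (F : set (T -> R))
  (fstar : T -> R) (eps C' r alpha : R) :
  is_cond_prob P eta ->
  convex_class F -> measurable_class F ->
  risk_minimizer P F fstar ->
  0 < eps ->
  NormEq P F fstar eps C' ->
  Hi eta eps C' r alpha ->
  (forall x, fstar x = Num.sg (2 * eta x - 1)) ->
  forall f, F f ->
    (Lpnorm P 2 (fun x => (f x - fstar x)%R) <= r%:E)%E ->
    (Lpnorm P 2 (fun x => (f x - fstar x)%R) * Lpnorm P 2 (fun x => (f x - fstar x)%R)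
       <= (2 / alpha)%:E * excess_risk P f fstar)%E.
Proof.
move=> eta_cond _ measF [Ffstar _] eps0 [C'0 normeq] [alpha0 [_ [r_small alpha_le]]]
  bayes f Ff N_le_r.
set g := fun x => f x - fstar x.
have mg : measurable_fun setT g by apply: measurable_funB; apply: measF.
have eta01 x : 0 <= eta x <= 1.
  by move: (alpha_le x); rewrite !le_min => /and3P[? ? _]; apply/andP; split; lra.
have [b Nb] : exists b, Lpnorm P 2 g = b%:E.
  exists (fine (Lpnorm P 2 g)); rewrite fineK // ge0_fin_numE ?Lnorm_ge0 //.
  exact: le_lt_trans N_le_r (ltry _).
have b0 : 0 <= b by rewrite -lee_fin -Nb Lnorm_ge0.
have moment : (\int[P]_z (`|g z.1| `^ (2 + eps))%:E <= (b ^+ 2 / 2)%:E)%E.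
  have normeq_g := normeq f Ff; rewrite -/g Nb -EFinM in normeq_g.
  apply: le_trans (integral_powR_le normeq_g _ _) _; [lra|by rewrite mulr_ge0 // ltW|].
  rewrite lee_fin scaled_powR_le_half_sqr //.
  by apply: le_trans r_small; rewrite -lee_fin -Nb.
have L1_lower := Lpnorm2_sqr_le_L1 eps0 mg Nb moment.
have excess := excess_risk_ge_L1 eta_cond eta01 (ltW alpha0) alpha_le bayes
  (measF f Ff) (measF fstar Ffstar).
rewrite Nb -EFinM -expr2 (le_trans L1_lower) //.
have -> : (2%:E = (2 / alpha)%:E * alpha%:E :> \bar R)%E.
  by rewrite -EFinM divfK // lt0r_neq0.
by rewrite -muleA lee_wpmul2l // lee_fin divr_ge0 // ltW.
Qed.
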